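(* Let $U_2>0$ and constants $k_1,k_2$ with $k_1>k_2-1>0$. Consider the system $$\dot e_\psi=e_r,\qquad \dot e_r=-e_r-U_2\,\sigma\!\left(\frac{k_1}{U_2}e_\psi+\frac{k_2-1}{U_2}e_r\right),$$ where $\sigma(t)=\frac{t}{\max(1,|t|)}$. Then for every solution, after a sufficiently large (finite) time the saturation operates in its linear region, i.e. $\left|\frac{k_1}{U_2}e_\psi+\frac{k_2-1}{U_2}e_r\right|\le 1$, and $(e_\psi,e_r)$ converges exponentially to zero. *)

From Stdlib Require Import Reals.
Open Scope R_scope.

Definition sat (t : R) : R := t / Rmax 1 (Rabs t).

(* With s := (k1 e_psi + (k2 - 1) e_r) / U2 and c := (k1 - k2 + 1) / U2^2, the function
   V := H(s) + c e_r^2 / 2, where H is the primitive of sat (the Huber function), satisfies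
   V' = -(k2 - 1) sat(s)^2 - c e_r^2: the cross terms cancel exactly because of the choice of c.
   While V >= 1/2, V' is bounded away from 0, so V drops below 1/2 in finite time and stays
   there; H(s) <= 1/2 forces |s| <= 1. From then on V is a positive definite quadratic form
   with V' <= -lam V, hence decays exponentially, and V dominates e_psi^2 + e_r^2. *)
From Stdlib Require Import Reals Lra Psatz.
Open Scope R_scope.

Lemma sat_id s : -1 <= s <= 1 -> sat s = s.
Proof. intros Hs. unfold sat. rewrite Rmax_left by (apply Rabs_le; lra). field. Qed.

Lemma sat_gt1 s : 1 < s -> sat s = 1.
Proof.
  intros Hs. unfold sat. rewrite Rabs_right, Rmax_right by lra. field. lra.
Qed.

Lemma sat_ltN1 s : s < -1 -> sat s = -1.
Proof.
  intros Hs. unfold sat. rewrite Rabs_left, Rmax_right by lra. field. lra.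
Qed.

Definition huber (s : R) : R :=
  if Rlt_dec 1 s then s - 1/2 else if Rlt_dec s (-1) then - s - 1/2 else s^2/2.

Lemma huber_id s : -1 <= s <= 1 -> huber s = s^2/2.
Proof.
  intros Hs. unfold huber.
  destruct (Rlt_dec 1 s); [lra|]. destruct (Rlt_dec s (-1)); [lra | easy].
Qed.

Lemma huber_ge0 s : 0 <= huber s.
Proof. unfold huber. destruct (Rlt_dec 1 s); [lra|]. destruct (Rlt_dec s (-1)); nra. Qed.

Lemma huber_le_half s : huber s <= 1/2 -> -1 <= s <= 1.
Proof. unfold huber. destruct (Rlt_dec 1 s); [lra|]. destruct (Rlt_dec s (-1)); lra. Qed.

Lemma sqr_le_huber s : s^2 <= 2 * huber s * (1 + 2 * huber s).
Proof. unfold huber. destruct (Rlt_dec 1 s); [nra|]. destruct (Rlt_dec s (-1)); nra. Qed.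

Lemma sat_sqr_ge_half s : 1/4 <= huber s -> 1/2 <= sat s ^ 2.
Proof.
  unfold huber. destruct (Rlt_dec 1 s) as [Hgt|Hgt]; [rewrite sat_gt1; lra|].
  destruct (Rlt_dec s (-1)) as [Hlt|Hlt]; [rewrite sat_ltN1; lra|].
  rewrite sat_id by lra. nra.
Qed.

(* [sat] is 1-Lipschitz, so its primitive has a quadratic Taylor remainder. *)
Lemma huber_taylor s h : Rabs (huber (s + h) - huber s - sat s * h) <= h^2/2.
Proof.
  unfold huber.
  destruct (Rlt_dec 1 s) as [a|a]; [rewrite sat_gt1 by lra|];
  destruct (Rlt_dec s (-1)) as [b|b]; try rewrite sat_ltN1 by lra;
  try apply Rnot_lt_le in a; try apply Rnot_lt_le in b;
  try rewrite sat_id by lra;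
  destruct (Rlt_dec 1 (s + h)) as [c|c];
  destruct (Rlt_dec (s + h) (-1)) as [d|d];
  try apply Rnot_lt_le in c; try apply Rnot_lt_le in d;
  apply Rabs_le; split; nra.
Qed.

Lemma huber_deriv s : derivable_pt_lim huber s (sat s).
Proof.
  intros eps Heps. exists (mkposreal eps Heps). intros h Hh0 Hh. simpl in Hh.
  assert (Habs : 0 < Rabs h) by (apply Rabs_pos_lt; auto).
  assert (Hsqr : h^2 = Rabs h * Rabs h) by (rewrite <- Rabs_mult, Rabs_right; nra).
  replace ((huber (s + h) - huber s) / h - sat s)
    with ((huber (s + h) - huber s - sat s * h) * / h) by (field; auto).
  rewrite Rabs_mult, Rabs_inv.
  pose proof (huber_taylor s h) as Htaylor.
  apply Rle_lt_trans with (Rabs h / 2); [|lra].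
  apply Rmult_le_reg_r with (Rabs h); [easy|].
  rewrite Rmult_assoc, Rinv_l by lra. nra.
Qed.

Lemma nonincreasing_of_deriv_nonpos (g g' : R -> R) (t0 : R) :
  (forall t, t0 <= t -> derivable_pt_lim g t (g' t)) ->
  (forall t, t0 <= t -> g' t <= 0) ->
  forall a b, t0 <= a -> a <= b -> g b <= g a.
Proof.
  intros Hd Hneg a b Ha Hab. destruct (Req_dec a b) as [<-|Hne]; [lra|].
  destruct (MVT_cor2 g g' a b) as [c [Hmvt Hc]]; [lra | intros c Hc; apply Hd; lra |].
  pose proof (Hneg c ltac:(lra)). nra.
Qed.

Lemma sublevel_reached (g g' : R -> R) (L m : R) :
  0 < m ->
  (forall t, 0 <= t -> derivable_pt_lim g t (g' t)) ->
  (forall t, 0 <= t -> g' t <= 0) ->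
  (forall t, 0 <= t -> L <= g t -> g' t <= - m) ->
  exists T, 0 <= T /\ g T <= L.
Proof.
  intros Hm Hd Hneg Hslope.
  set (T := (Rabs (g 0 - L) + 1) / m).
  assert (HmT : m * T = Rabs (g 0 - L) + 1) by (unfold T; field; lra).
  assert (HT : 0 < T) by (pose proof (Rabs_pos (g 0 - L)); nra).
  exists T. split; [lra|]. destruct (Rle_dec (g T) L) as [HgT|HgT]; [easy|]. exfalso.
  destruct (MVT_cor2 g g' 0 T) as [c [Hmvt Hc]]; [lra | intros c Hc; apply Hd; lra |].
  pose proof (nonincreasing_of_deriv_nonpos g g' 0 Hd Hneg c T ltac:(lra) ltac:(lra)).
  pose proof (Hslope c ltac:(lra) ltac:(lra)).
  pose proof (Rle_abs (g 0 - L)). nra.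
Qed.

(* Gronwall: [g t * exp (lam * t)] is nonincreasing. *)
Lemma exp_decay_of_deriv_le (g g' : R -> R) (t0 lam : R) :
  (forall t, t0 <= t -> derivable_pt_lim g t (g' t)) ->
  (forall t, t0 <= t -> g' t <= - lam * g t) ->
  forall t, t0 <= t -> g t <= g t0 * exp (- lam * (t - t0)).
Proof.
  intros Hd Hle t Ht.
  set (h := fun u => g u * exp (lam * u)).
  set (h' := fun u => g' u * exp (lam * u) + g u * (exp (lam * u) * (lam * 1))).
  assert (Hexp : forall u, derivable_pt_lim (fun u => exp (lam * u)) u (exp (lam * u) * (lam * 1))).
  { intros u. apply (derivable_pt_lim_comp (mult_real_fct lam id) exp u).
    - apply derivable_pt_lim_scal, derivable_pt_lim_id.
    - apply derivable_pt_lim_exp. }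
  assert (Hh : g t * exp (lam * t) <= g t0 * exp (lam * t0)).
  { apply (nonincreasing_of_deriv_nonpos h h' t0); try lra.
    - intros u Hu. exact (derivable_pt_lim_mult g _ u _ _ (Hd u Hu) (Hexp u)).
    - intros u Hu. unfold h'. pose proof (Hle u Hu). pose proof (exp_pos (lam * u)). nra. }
  assert (Hinv : exp (lam * t) * exp (- lam * t) = 1)
    by (rewrite <- exp_plus, <- exp_0; f_equal; ring).
  assert (Hshift : exp (lam * t0) * exp (- lam * t) = exp (- lam * (t - t0)))
    by (rewrite <- exp_plus; f_equal; ring).
  rewrite <- Hshift, <- Rmult_assoc.
  replace (g t) with (g t * exp (lam * t) * exp (- lam * t)) by (rewrite Rmult_assoc, Hinv; ring).
  apply Rmult_le_compat_r; [left; apply exp_pos | exact Hh].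
Qed.

Lemma sqrt_le_exp (x K lam t : R) :
  0 <= K -> x <= K * exp (- lam * t) -> sqrt x <= sqrt K * exp (- (lam / 2) * t).
Proof.
  intros HK Hx.
  assert (Hhalf : exp (- lam * t) = exp (- (lam / 2) * t) * exp (- (lam / 2) * t))
    by (rewrite <- exp_plus; f_equal; field).
  pose proof (exp_pos (- (lam / 2) * t)).
  rewrite <- (sqrt_square (exp (- (lam / 2) * t))), <- sqrt_mult by nra.
  apply sqrt_le_1_alt. nra.
Qed.

Lemma sqr_sum_le_of_lin (k p q x y s a b : R) :
  k <> 0 -> k * x = p * s - q * y -> s^2 <= a -> y^2 <= b ->
  x^2 + y^2 <= (2 * p^2 * a + 2 * q^2 * b) / k^2 + b.
Proof.
  intros Hk Hlin Hs Hy.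
  assert (Hx : (k * x)^2 <= 2 * p^2 * a + 2 * q^2 * b).
  { rewrite Hlin. pose proof (pow2_ge_0 (p * s + q * y)). nra. }
  assert (Hk2 : 0 < k^2) by (pose proof (Rsqr_pos_lt k Hk); unfold Rsqr in *; nra).
  assert (x^2 <= (2 * p^2 * a + 2 * q^2 * b) / k^2).
  { apply Rmult_le_reg_l with (k^2); [easy|].
    replace (k^2 * ((2 * p^2 * a + 2 * q^2 * b) / k^2)) with (2 * p^2 * a + 2 * q^2 * b)
      by (field; lra).
    lra. }
  lra.
Qed.

Lemma lyap_slope_le_of_ge_half (q c s y : R) :
  0 < q -> 0 < c -> 1/2 <= huber s + c/2 * y^2 ->
  - q * sat s ^ 2 - c * y^2 <= - Rmin (q/2) (1/2).
Proof.
  intros Hq Hc HV. pose proof (Rmin_l (q/2) (1/2)). pose proof (Rmin_r (q/2) (1/2)).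
  destruct (Rle_dec (1/4) (huber s)) as [Hbig|Hsmall].
  - pose proof (sat_sqr_ge_half s Hbig). nra.
  - pose proof (pow2_ge_0 (sat s)). nra.
Qed.

Lemma lyap_slope_le_linear (q c s y : R) :
  0 < q -> 0 <= c -> -1 <= s <= 1 ->
  - q * sat s ^ 2 - c * y^2 <= - (2 * Rmin q 1) * (huber s + c/2 * y^2).
Proof.
  intros Hq Hc Hs. rewrite sat_id, huber_id by easy.
  pose proof (Rmin_l q 1). pose proof (Rmin_r q 1).
  assert (0 <= (q - Rmin q 1) * s^2) by (apply Rmult_le_pos; [lra | apply pow2_ge_0]).
  assert (0 <= c * ((1 - Rmin q 1) * y^2))
    by (apply Rmult_le_pos, Rmult_le_pos; [lra | lra | apply pow2_ge_0]).
  nra.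
Qed.

Section ErrorDynamics.

Variables U2 k1 q : R.
Hypothesis HU2 : 0 < U2.
Hypothesis Hqk1 : q < k1.
Hypothesis Hq : 0 < q.

Variables epsi er : R -> R.

Definition sat_arg (t : R) : R := k1 / U2 * epsi t + q / U2 * er t.

Hypothesis Hpsi : forall t, 0 <= t -> derivable_pt_lim epsi t (er t).
Hypothesis Her : forall t, 0 <= t -> derivable_pt_lim er t (- er t - U2 * sat (sat_arg t)).

Definition er_weight : R := (k1 - q) / U2^2.
Definition lyap (t : R) : R := huber (sat_arg t) + er_weight/2 * er t ^ 2.
Definition lyap' (t : R) : R := - q * sat (sat_arg t) ^ 2 - er_weight * er t ^ 2.
Definition decay_rate : R := 2 * Rmin q 1.

Lemma er_weight_pos : 0 < er_weight.
Proof. unfold er_weight. apply Rdiv_lt_0_compat; nra. Qed.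

Lemma decay_rate_pos : 0 < decay_rate.
Proof. unfold decay_rate. pose proof (Rmin_pos q 1 Hq Rlt_0_1). lra. Qed.

Lemma lyap_ge0 t : 0 <= lyap t.
Proof. unfold lyap. pose proof (huber_ge0 (sat_arg t)). pose proof er_weight_pos. nra. Qed.

Lemma lyap_deriv t : 0 <= t -> derivable_pt_lim lyap t (lyap' t).
Proof.
  intros Ht.
  assert (Hs : derivable_pt_lim sat_arg t
                 (k1 / U2 * er t + q / U2 * (- er t - U2 * sat (sat_arg t)))).
  { apply derivable_pt_lim_plus; apply derivable_pt_lim_scal; auto. }
  pose proof (derivable_pt_lim_comp sat_arg huber t _ _ Hs (huber_deriv (sat_arg t))) as Hh.
  pose proof (derivable_pt_lim_comp er (fun x => x ^ 2) t _ _ (Her t Ht)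
                (derivable_pt_lim_pow (er t) 2)) as Hsq.
  pose proof (derivable_pt_lim_plus _ _ t _ _ Hh (derivable_pt_lim_scal _ (er_weight/2) t _ Hsq))
    as Hsum.
  unfold lyap, lyap'.
  replace (- q * sat (sat_arg t) ^ 2 - er_weight * er t ^ 2)
    with (sat (sat_arg t) * (k1 / U2 * er t + q / U2 * (- er t - U2 * sat (sat_arg t)))
          + er_weight / 2 * (INR 2 * er t ^ Nat.pred 2 * (- er t - U2 * sat (sat_arg t))))
    by (unfold er_weight; simpl; field; lra).
  exact Hsum.
Qed.

Lemma lyap'_nonpos t : 0 <= t -> lyap' t <= 0.
Proof. intros _. unfold lyap'. pose proof er_weight_pos. nra. Qed.

Lemma lyap_nonincreasing a b : 0 <= a -> a <= b -> lyap b <= lyap a.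
Proof. exact (nonincreasing_of_deriv_nonpos lyap lyap' 0 lyap_deriv lyap'_nonpos a b). Qed.

Lemma linear_region_eventually :
  exists T, 0 <= T /\ forall t, T <= t -> -1 <= sat_arg t <= 1.
Proof.
  destruct (sublevel_reached lyap lyap' (1/2) (Rmin (q/2) (1/2))) as [T [HT HVT]].
  - apply Rmin_pos; lra.
  - exact lyap_deriv.
  - exact lyap'_nonpos.
  - intros t _ Ht. apply lyap_slope_le_of_ge_half; [easy | exact er_weight_pos | exact Ht].
  - exists T. split; [easy|]. intros t Ht. apply huber_le_half.
    pose proof (lyap_nonincreasing T t HT Ht). unfold lyap in *.
    pose proof er_weight_pos. pose proof (pow2_ge_0 (er t)). nra.
Qed.

Lemma lyap_exp_bound T :
  0 <= T -> (forall t, T <= t -> -1 <= sat_arg t <= 1) ->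
  forall t, 0 <= t -> lyap t <= lyap 0 * exp (decay_rate * T) * exp (- decay_rate * t).
Proof.
  intros HT Hlin t Ht.
  pose proof decay_rate_pos.
  assert (Hshift :
    exp (decay_rate * T) * exp (- decay_rate * t) = exp (- decay_rate * (t - T)))
    by (rewrite <- exp_plus; f_equal; ring).
  pose proof (lyap_ge0 0). pose proof (lyap_nonincreasing 0 T (Rle_refl 0) HT).
  rewrite Rmult_assoc, Hshift.
  destruct (Rle_dec T t) as [HTt|HTt].
  - assert (Hdecay : lyap t <= lyap T * exp (- decay_rate * (t - T))).
    { apply (exp_decay_of_deriv_le lyap lyap' T); [intros u Hu; apply lyap_deriv; lra | | easy].
      intros u Hu. apply lyap_slope_le_linear; auto using Hlin. left; apply er_weight_pos. }
    pose proof (exp_pos (- decay_rate * (t - T))). nra.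
  - assert (Hge1 : 1 <= exp (- decay_rate * (t - T)))
      by (pose proof (exp_ineq1_le (- decay_rate * (t - T))); nra).
    apply Rle_trans with (lyap 0); [exact (lyap_nonincreasing 0 t (Rle_refl 0) Ht)|].
    rewrite <- (Rmult_1_r (lyap 0)) at 1. apply Rmult_le_compat_l; lra.
Qed.

Definition state_gain : R :=
  (2 * U2^2 * (2 * (1 + 2 * lyap 0)) + 2 * q^2 * (2 / er_weight)) / k1^2 + 2 / er_weight.

Lemma state_sqr_le_lyap t : 0 <= t -> epsi t ^ 2 + er t ^ 2 <= state_gain * lyap t.
Proof.
  intros Ht. pose proof er_weight_pos.
  pose proof (huber_ge0 (sat_arg t)). pose proof (pow2_ge_0 (er t)).
  assert (Hhuber : huber (sat_arg t) <= lyap t) by (unfold lyap; nra).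
  assert (Hdecr : lyap t <= lyap 0) by exact (lyap_nonincreasing 0 t (Rle_refl 0) Ht).
  assert (Hs : sat_arg t ^ 2 <= 2 * (1 + 2 * lyap 0) * lyap t).
  { pose proof (sqr_le_huber (sat_arg t)). nra. }
  assert (Her2 : er t ^ 2 <= 2 / er_weight * lyap t).
  { apply Rmult_le_reg_l with er_weight; [easy|].
    replace (er_weight * (2 / er_weight * lyap t)) with (2 * lyap t) by (field; lra).
    unfold lyap. nra. }
  eapply Rle_trans.
  - apply (sqr_sum_le_of_lin k1 U2 q (epsi t) (er t) (sat_arg t));
      [lra | unfold sat_arg; field; lra | exact Hs | exact Her2].
  - right. unfold state_gain. field. split; lra.
Qed.

Lemma state_gain_ge0 : 0 <= state_gain.
Proof.
  pose proof er_weight_pos. pose proof (lyap_ge0 0). unfold state_gain.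
  assert (0 < 2 / er_weight) by (apply Rdiv_lt_0_compat; lra).
  assert (0 <= 2 * U2^2 * (2 * (1 + 2 * lyap 0)) + 2 * q^2 * (2 / er_weight)) by nra.
  assert (0 <= / k1^2) by (left; apply Rinv_0_lt_compat; nra).
  unfold Rdiv at 1. nra.
Qed.

Lemma state_exp_decay :
  exists C lam, 0 < lam /\ forall t, 0 <= t ->
    sqrt (epsi t ^ 2 + er t ^ 2) <= C * exp (- lam * t).
Proof.
  destruct linear_region_eventually as [T [HT Hlin]].
  pose proof state_gain_ge0. pose proof (lyap_ge0 0). pose proof (exp_pos (decay_rate * T)).
  exists (sqrt (state_gain * lyap 0 * exp (decay_rate * T))), (decay_rate / 2).
  split; [pose proof decay_rate_pos; lra|].
  intros t Ht. apply sqrt_le_exp; [apply Rmult_le_pos; [apply Rmult_le_pos|]; lra|].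
  eapply Rle_trans; [exact (state_sqr_le_lyap t Ht)|].
  rewrite !Rmult_assoc. apply Rmult_le_compat_l; [easy|].
  rewrite <- !Rmult_assoc. exact (lyap_exp_bound T HT Hlin t Ht).
Qed.

End ErrorDynamics.

Theorem lemma2 (U2 k1 k2 : R) (HU2 : 0 < U2) (Hk : k1 > k2 - 1) (Hk2 : k2 - 1 > 0)
  (epsi er : R -> R)
  (Hpsi : forall t, 0 <= t -> derivable_pt_lim epsi t (er t))
  (Her : forall t, 0 <= t ->
     derivable_pt_lim er t
       (- er t - U2 * sat (k1 / U2 * epsi t + (k2 - 1) / U2 * er t))) :
  (exists T, 0 <= T /\ forall t, T <= t ->
      Rabs (k1 / U2 * epsi t + (k2 - 1) / U2 * er t) <= 1)
  /\
  (exists C lam, 0 < lam /\ forall t, 0 <= t ->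
      sqrt (epsi t ^ 2 + er t ^ 2) <= C * exp (- lam * t)).
Proof.
  split.
  - destruct (linear_region_eventually U2 k1 (k2 - 1) HU2 Hk Hk2 epsi er Hpsi Her)
      as [T [HT Hlin]].
    exists T. split; [easy|]. intros t Ht. apply Rabs_le, Hlin, Ht.
  - exact (state_exp_decay U2 k1 (k2 - 1) HU2 Hk Hk2 epsi er Hpsi Her).
Qed.
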